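(* Let $A$ be a finite dimensional algebra over an algebraically closed field $F$ of characteristic zero and let $P_1$, $P_2$ be presentations of $A$ by full algebras. Let $T_1\cong(T_1)_{ss}\oplus J_{T_1}$ be a full summand of $P_1$ and $T_2\cong(T_2)_{ss}\oplus J_{T_2}$ a full summand of $P_2$ with $(T_1)_{ss}\cong(T_2)_{ss}\cong U$. Let $T_1'=U\oplus J_{T_1}\oplus J_{T_2}$ be the fusion of $T_1$ and $T_2$, i.e. the subalgebra of $T_1\times T_2$ consisting of all pairs $(u+j_1,\varphi(u)+j_2)$ with $u\in(T_1)_{ss}$, $j_1\in J_{T_1}$, $j_2\in J_{T_2}$, where $\varphi:(T_1)_{ss}\to(T_2)_{ss}$ is a fixed isomorphism. Let $P_1'$ be the direct sum of full algebras obtained from $P_1$ by replacing the summand $T_1$ by $T_1'$. Then $P_1'$ is a presentation of $A$.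
   Context: For a finite dimensional algebra $T$ with Wedderburn–Malcev decomposition $T\cong T'_1\times\cdots\times T'_q\oplus J_T$, $T$ is full if, up to permuting simple components, $T'_1J_TT'_2\cdots J_TT'_q\neq0$. A presentation of $A$ by full algebras is a direct sum $T_1\oplus\cdots\oplus T_n$ of full algebras (with this decomposition fixed) which is PI-equivalent to $A$, i.e. has the same $T$-ideal of polynomial identities. *)

From HB Require Import structures.
From mathcomp Require Import all_boot all_order all_algebra.
Set Implicit Arguments.
Unset Strict Implicit.
Unset Printing Implicit Defensive.
Import GRing.Theory.
Local Open Scope ring_scope.

Section Defs.
Variable F : fieldType.

Record ncalg := NCAlg { carrier : vectType F; amul : carrier -> carrier -> carrier }.

Definition is_alg (A : ncalg) : Prop :=
  [/\ (forall (a : F) (x y z : carrier A),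
         amul (a *: x + y) z = a *: amul x z + amul y z),
      (forall (a : F) (x y z : carrier A),
         amul x (a *: y + z) = a *: amul x y + amul x z)
    & (forall x y z : carrier A, amul x (amul y z) = amul (amul x y) z)].

(* Noncommutative polynomials without constant term in variables x_0, x_1, ...:
   a finite list of (coefficient, nonempty word), a word (i, w) standing for
   x_i x_{w_1} ... x_{w_m}. *)
Definition ncpoly := seq (F * (nat * seq nat)).

Definition eval_word (A : ncalg) (s : nat -> carrier A) (w : nat * seq nat) :=
  foldl (fun acc k => amul acc (s k)) (s w.1) w.2.

Definition eval_poly (A : ncalg) (f : ncpoly) (s : nat -> carrier A) : carrier A :=
  \sum_(t <- f) t.1 *: eval_word s t.2.

Definition is_identity (A : ncalg) (f : ncpoly) : Prop :=
  forall s : nat -> carrier A, eval_poly f s = 0.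

Definition PIeq (A B : ncalg) : Prop :=
  forall f : ncpoly, is_identity A f <-> is_identity B f.

Definition alg0 : ncalg := @NCAlg 'rV[F]_0 (fun _ _ => 0).

Definition prod_alg (A B : ncalg) : ncalg :=
  @NCAlg (carrier A * carrier B)%type
    (fun x y => (amul x.1 y.1, amul x.2 y.2)).

Fixpoint dsum (Ts : seq ncalg) : ncalg :=
  if Ts is T :: Ts' then prod_alg T (dsum Ts') else alg0.

Definition spmul (A : ncalg) (U V : {vspace carrier A}) : {vspace carrier A} :=
  <<[seq amul u v | u <- vbasis U, v <- vbasis V]>>%VS.

Fixpoint sppow (A : ncalg) (I : {vspace carrier A}) (k : nat) : {vspace carrier A} :=
  if k is k'.+1 then (if k' is 0 then I else spmul (sppow I k') I) else fullv.

Definition nilpotent_sp (A : ncalg) (I : {vspace carrier A}) : Prop :=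
  exists k, (0 < k)%N /\ sppow I k = 0%VS.

Definition is_ideal (A : ncalg) (I : {vspace carrier A}) : Prop :=
  forall x y : carrier A, x \in I -> amul x y \in I /\ amul y x \in I.

Definition is_radical (A : ncalg) (J : {vspace carrier A}) : Prop :=
  [/\ is_ideal J, nilpotent_sp J &
      forall I, is_ideal I -> nilpotent_sp I -> (I <= J)%VS].

Definition is_subalg (A : ncalg) (S : {vspace carrier A}) : Prop :=
  forall x y : carrier A, x \in S -> y \in S -> amul x y \in S.

Definition wm_complement (A : ncalg) (J S : {vspace carrier A}) : Prop :=
  [/\ is_subalg S, (S + J)%VS = fullv & (S :&: J)%VS = 0%VS].

Definition ideal_in (A : ncalg) (S C : {vspace carrier A}) : Prop :=
  (C <= S)%VS /\
  forall x y : carrier A, x \in C -> y \in S -> amul x y \in C /\ amul y x \in C.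

Definition simple_component (A : ncalg) (S C : {vspace carrier A}) : Prop :=
  [/\ C != 0%VS, ideal_in S C &
      forall D, ideal_in S D -> D != 0%VS -> (D <= C)%VS -> D = C].

(* C_1 J C_2 J ... J C_q  (the empty product, q = 0, is taken to be 0) *)
Fixpoint fchain (A : ncalg) (J : {vspace carrier A}) (cs : seq {vspace carrier A})
  : {vspace carrier A} :=
  match cs with
  | [::] => 0%VS
  | C :: cs' => if cs' is [::] then C else spmul (spmul C J) (fchain J cs')
  end.

Definition full (A : ncalg) : Prop :=
  exists (J S : {vspace carrier A}) (cs : seq {vspace carrier A}),
    [/\ is_radical J, wm_complement J S, uniq cs,
        (forall C, simple_component S C <-> C \in cs) &
        fchain J cs != 0%VS].

Definition presentation (A : ncalg) (Ts : seq ncalg) : Prop :=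
  (forall j, (j < size Ts)%N -> is_alg (nth alg0 Ts j) /\ full (nth alg0 Ts j)) /\ PIeq A (dsum Ts).

Definition fusion_space (T1 T2 : ncalg) (J1 S1 : {vspace carrier T1})
  (J2 : {vspace carrier T2}) (phi : 'Hom(carrier T1, carrier T2))
  : {vspace (carrier T1 * carrier T2)%type} :=
  <<[seq (u, phi u) | u <- vbasis S1] ++ [seq (j, 0%R : carrier T2) | j <- vbasis J1]
      ++ [seq (0%R : carrier T1, j) | j <- vbasis J2]>>%VS.

Definition fusion (T1 T2 : ncalg) (J1 S1 : {vspace carrier T1})
  (J2 : {vspace carrier T2}) (phi : 'Hom(carrier T1, carrier T2)) : ncalg :=
  @NCAlg (subvs_of (fusion_space J1 S1 J2 phi))
    (fun x y => vsproj (fusion_space J1 S1 J2 phi)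
                  (@amul (prod_alg T1 T2) (vsval x) (vsval y))).

End Defs.

From HB Require Import structures.
From mathcomp Require Import all_boot all_order all_algebra.
Set Implicit Arguments.
Unset Strict Implicit.
Unset Printing Implicit Defensive.
Import GRing.Theory.
Local Open Scope ring_scope.

(* The fusion [B] lies in [T1 * T2], and its two projections are surjective
   algebra maps that are jointly injective, so every identity of both [T1] and
   [T2] holds in [B].  The projection [p] of [T1] onto [S1] along the ideal [J1]
   is multiplicative, so [t |-> (t, phi (p t))] is an algebra embedding of [T1]
   into [B] splitting the first projection.  Hence
   Id(T1) ∩ Id(T2) ⊆ Id(B) ⊆ Id(T1), while Id(A) ⊆ Id(T1) ∩ Id(T2), so
   replacing [T1] by [B] in [P1] does not change the T-ideal of the sum.
   Fullness moves along the splitting: the radical of [B] is the preimage of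
   [J1], the section carries a Wedderburn-Malcev complement and the simple
   components of [T1] into [B], and the first projection maps the chain
   [C1 J C2 ... J Cq] of [B] onto the nonzero chain of [T1]. *)

Section LinearMaps.
Variables (F : fieldType) (U V : vectType F).

Lemma lfunE_linear (f : U -> V) : linear f -> linfun f =1 f.
Proof.
move=> lin_f; pose fL : {linear U -> V} := HB.pack f (GRing.isLinear.Build _ _ _ _ f lin_f).
exact: (lfunE fL).
Qed.

Lemma memv_span_linear (f : U -> V) X u :
  linear f -> u \in <<X>>%VS -> f u \in <<map f X>>%VS.
Proof.
move=> /lfunE_linear fE Xu; rewrite -fE -(eq_map fE) -limg_span.
exact: memv_img.
Qed.

Lemma memv_map_vbasis (f : U -> V) (D : {vspace U}) u :
  linear f -> u \in D -> f u \in <<map f (vbasis D)>>%VS.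
Proof. by rewrite -{1}(span_basis (vbasisP D)); apply: memv_span_linear. Qed.

Lemma limgK_in (f : 'Hom(U, V)) (g : 'Hom(V, U)) (D : {vspace U}) :
  {in D, cancel f g} -> (g @: (f @: D))%VS = D.
Proof.
move=> fK; rewrite -limg_comp -[RHS]lim1g; apply: eq_in_limg => x Dx.
by rewrite comp_lfunE id_lfunE fK.
Qed.

Lemma limg_fullv (f : 'Hom(U, V)) : (forall y, exists x, f x = y) -> limg f = fullv.
Proof.
move=> f_onto; apply/eqP; rewrite eqEsubv subvf /=; apply/subvP => y _.
by have [x <-] := f_onto y; apply: memv_img; apply: memvf.
Qed.

End LinearMaps.

Section Algebra.
Variables (F : fieldType) (A : ncalg F) (hA : is_alg A).
Implicit Types (x y z : carrier A) (U V I : {vspace carrier A}).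

Lemma amul_linearl z : linear (fun x => amul x z).
Proof. by case: hA => linl _ _ a x y; apply: linl. Qed.

Lemma amul_linearr z : linear (amul z).
Proof. by case: hA => _ linr _ a x y; apply: linr. Qed.

Lemma amulA x y z : amul x (amul y z) = amul (amul x y) z.
Proof. by case: hA. Qed.

Lemma amul0l z : amul 0 z = 0.
Proof. by have := amul_linearl z (-1) 0 0; rewrite scaler0 addr0 scaleN1r addNr. Qed.

Lemma amul0r z : amul z 0 = 0.
Proof. by have := amul_linearr z (-1) 0 0; rewrite scaler0 addr0 scaleN1r addNr. Qed.

Lemma amulDl x y z : amul (x + y) z = amul x z + amul y z.
Proof. by have := amul_linearl z 1 x y; rewrite !scale1r. Qed.

Lemma amulDr x y z : amul z (x + y) = amul z x + amul z y.
Proof. by have := amul_linearr z 1 x y; rewrite !scale1r. Qed.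

Lemma amulZl a x z : amul (a *: x) z = a *: amul x z.
Proof. by have := amul_linearl z a x 0; rewrite !addr0 amul0l addr0. Qed.

Lemma amulZr a x z : amul z (a *: x) = a *: amul z x.
Proof. by have := amul_linearr z a x 0; rewrite !addr0 amul0r addr0. Qed.

Lemma amulBl x y z : amul (x - y) z = amul x z - amul y z.
Proof. by rewrite amulDl -[- y]scaleN1r amulZl scaleN1r. Qed.

Lemma amulBr x y z : amul z (x - y) = amul z x - amul z y.
Proof. by rewrite amulDr -[- y]scaleN1r amulZr scaleN1r. Qed.

Lemma mem_spmul U V u v : u \in U -> v \in V -> amul u v \in spmul U V.
Proof.
move=> Uu Vv; have := memv_map_vbasis (amul_linearl v) Uu; apply: subvP.
apply/span_subvP => _ /mapP [b Ub ->].
have := memv_map_vbasis (amul_linearr b) Vv; apply: subvP.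
by apply/span_subvP => _ /mapP [c Vc ->]; apply: memv_span; apply: allpairs_f.
Qed.

Lemma spmul_subv U V I :
  (forall u v, u \in U -> v \in V -> amul u v \in I) -> (spmul U V <= I)%VS.
Proof.
move=> UV_I; apply/span_subvP => _ /allpairsP [[u v] /= [Uu Vv ->]].
by apply: UV_I; apply: vbasis_mem.
Qed.

Lemma spmulS U U' V V' :
  (U <= U')%VS -> (V <= V')%VS -> (spmul U V <= spmul U' V')%VS.
Proof.
move=> /subvP sUU' /subvP sVV'; apply: spmul_subv => u v Uu Vv.
by apply: mem_spmul; [apply: sUU' | apply: sVV'].
Qed.

Lemma spmul0v V : spmul 0%VS V = 0%VS.
Proof.
apply/eqP; rewrite -subv0; apply: spmul_subv => u v; rewrite memv0 => /eqP -> _.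
by rewrite amul0l mem0v.
Qed.

Lemma sppowS I k : sppow I k.+2 = spmul (sppow I k.+1) I.
Proof. by []. Qed.

Lemma sppow_subv I I' k : (I <= I')%VS -> (sppow I k <= sppow I' k)%VS.
Proof.
move=> sII'; elim: k => [|[|k] IHk] //.
by rewrite !sppowS; apply: spmulS.
Qed.

Lemma sppow_eq0_leq I n m :
  (0 < n)%N -> (n <= m)%N -> sppow I n = 0%VS -> sppow I m = 0%VS.
Proof.
case: n => // n _ /subnKC <- In0; elim: (m - n.+1)%N => [|d IHd]; first by rewrite addn0.
by rewrite addnS sppowS IHd spmul0v.
Qed.

Lemma radical_uniq (J J' : {vspace carrier A}) : is_radical J -> is_radical J' -> J = J'.
Proof.
case=> iJ nJ maxJ [iJ' nJ' maxJ'].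
by apply/eqP; rewrite eqEsubv maxJ // maxJ'.
Qed.

End Algebra.

Section AlgebraHom.
Variables (F : fieldType) (A B : ncalg F) (hA : is_alg A) (hB : is_alg B).
Variable f : 'Hom(carrier A, carrier B).
Hypothesis fM : forall x y, f (amul x y) = amul (f x) (f y).

Lemma limg_spmul U V : (f @: spmul U V)%VS = spmul (f @: U) (f @: V).
Proof.
apply/eqP; rewrite eqEsubv; apply/andP; split.
  rewrite limg_span; apply/span_subvP => _ /mapP [_ /allpairsP [[u v] /= [Uu Vv ->]] ->].
  by rewrite fM; apply: mem_spmul => //; apply: memv_img; apply: vbasis_mem.
apply: spmul_subv => _ _ /memv_imgP [u Uu ->] /memv_imgP [v Vv ->].
by rewrite -fM; apply: memv_img; apply: mem_spmul.
Qed.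

Lemma limg_sppow I k : (0 < k)%N -> (f @: sppow I k)%VS = sppow (f @: I) k.
Proof. by case: k => // k _; elim: k => [|k IHk] //; rewrite !sppowS limg_spmul IHk. Qed.

Lemma nilpotent_limg I : nilpotent_sp I -> nilpotent_sp (f @: I).
Proof. by case=> k [k_gt0 Ik0]; exists k; rewrite -limg_sppow // Ik0 limg0. Qed.

Lemma limg_fchain J cs :
  (f @: fchain J cs)%VS = fchain (f @: J) (map (lfun_img f) cs).
Proof.
elim: cs => [|C [|D cs] IHcs] /=; first exact: limg0; first by [].
by rewrite !limg_spmul IHcs.
Qed.

Lemma is_ideal_preim I : is_ideal I -> is_ideal (f @^-1: I).
Proof. by move=> iI x y; rewrite -!memv_preim !fM; apply: iI. Qed.

Lemma ideal_in_limg S C : ideal_in S C -> ideal_in (f @: S) (f @: C).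
Proof.
case=> sCS iC; split; first exact: limgS.
move=> _ _ /memv_imgP [x Cx ->] /memv_imgP [y Sy ->].
by rewrite -!fM; have [? ?] := iC x y Cx Sy; split; apply: memv_img.
Qed.

Lemma eval_poly_hom (P : ncpoly F) s : f (eval_poly P s) = eval_poly P (f \o s).
Proof.
have foldlM a w : f (foldl (fun acc k => amul acc (s k)) a w) =
                  foldl (fun acc k => amul acc (f (s k))) (f a) w.
  by elim: w a => //= k w IHw a; rewrite IHw fM.
rewrite linear_sum; apply: eq_bigr => t _.
by rewrite linearZ; congr (_ *: _); apply: foldlM.
Qed.

Lemma identity_inj (P : ncpoly F) :
  injective f -> is_identity B P -> is_identity A P.
Proof.
by move=> f_inj idB s; apply: f_inj; rewrite eval_poly_hom idB linear0.
Qed.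

Hypothesis f_onto : limg f = fullv.

Lemma is_ideal_limg I : is_ideal I -> is_ideal (f @: I).
Proof.
move=> iI _ y /memv_imgP [x Ix ->].
have /memv_imgP [y' _ ->] : y \in limg f by rewrite f_onto memvf.
by rewrite -!fM; have [? ?] := iI x y' Ix; split; apply: memv_img.
Qed.

End AlgebraHom.

Lemma simple_component_limg (F : fieldType) (A B : ncalg F)
    (h : 'Hom(carrier A, carrier B)) (k : 'Hom(carrier B, carrier A))
    (S C : {vspace carrier A}) :
  (forall x y, h (amul x y) = amul (h x) (h y)) ->
  (forall x y, k (amul x y) = amul (k x) (k y)) ->
  {in S, cancel h k} -> simple_component S C -> simple_component (h @: S) (h @: C).
Proof.
move=> hM kM hK [C_nz iC minC].
have /subvP sCS := iC.1.
have khC : (k @: (h @: C))%VS = C by apply: limgK_in => x /sCS; apply: hK.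
split.
- by apply: contra C_nz => /eqP hC0; rewrite -khC hC0 limg0.
- exact: ideal_in_limg.
move=> D iD D_nz sD_hC.
have hkD : (h @: (k @: D))%VS = D.
  by apply: limgK_in => _ /(subvP iD.1) /memv_imgP [x Sx ->]; rewrite hK.
have ikD : ideal_in S (k @: D) by rewrite -[S](limgK_in hK); apply: ideal_in_limg.
have kD_nz : (k @: D)%VS != 0%VS by apply: contra D_nz => /eqP kD0; rewrite -hkD kD0 limg0.
by rewrite -hkD (minC _ ikD kD_nz) // -khC limgS.
Qed.

Section Retract.
Variables (F : fieldType) (B T : ncalg F) (hB : is_alg B) (hT : is_alg T).
Variables (pi : 'Hom(carrier B, carrier T)) (sigma : 'Hom(carrier T, carrier B)).
Hypotheses (piM : forall x y, pi (amul x y) = amul (pi x) (pi y))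
           (sigmaM : forall x y, sigma (amul x y) = amul (sigma x) (sigma y))
           (sigmaK : cancel sigma pi).
Variable JT : {vspace carrier T}.
Hypotheses (radT : is_radical JT) (radB : is_radical (pi @^-1: JT)).

Lemma wm_complement_retract S :
  wm_complement JT S -> wm_complement (pi @^-1: JT) (sigma @: S).
Proof.
case=> subS addS capS; split.
- move=> _ _ /memv_imgP [s Ss ->] /memv_imgP [t St ->].
  by rewrite -sigmaM; apply: memv_img; apply: subS.
- apply/eqP; rewrite eqEsubv subvf; apply/subvP => x _.
  have /memv_addP [s Ss [j Jj pixE]] : pi x \in (S + JT)%VS by rewrite addS memvf.
  rewrite -[x](subrK (sigma s)) addrC memv_add ?memv_img //.
  by rewrite -memv_preim linearB /= sigmaK pixE addrC addKr.
apply/eqP; rewrite -subv0; apply/subvP => _ /[!memv_cap] /andP [/memv_imgP [s Ss ->]].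
rewrite -memv_preim sigmaK => Js.
have : s \in (S :&: JT)%VS by rewrite memv_cap Ss.
by rewrite capS memv0 => /eqP ->; rewrite linear0 mem0v.
Qed.

Lemma full_retract : full T -> full B.
Proof.
case=> J [S [cs [radJ cS uniq_cs scS fchain_nz]]].
have eqJ := radical_uniq radJ radT; subst J.
have pi_onto : limg pi = fullv by apply: limg_fullv => y; exists (sigma y).
have sigmaSK : {in (sigma @: S)%VS, cancel pi sigma}.
  by move=> _ /memv_imgP [s _ ->]; rewrite sigmaK.
have sigmaK_img C : (pi @: (sigma @: C))%VS = C by apply: limgK_in => x _; apply: sigmaK.
exists (pi @^-1: JT)%VS, (sigma @: S)%VS, (map (lfun_img sigma) cs); split => //.
- exact: wm_complement_retract.
- by rewrite map_inj_uniq // => C D eqCD; rewrite -(sigmaK_img C) eqCD sigmaK_img.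
- move=> C; split => [scC | /mapP [D csD ->]].
    have [_ [/subvP subC _] _] := scC.
    apply/mapP; exists (pi @: C)%VS.
      by apply/scS; rewrite -(sigmaK_img S); apply: simple_component_limg.
    by rewrite limgK_in // => x /subC; apply: sigmaSK.
  by apply: (simple_component_limg sigmaM piM _ ((scS D).2 csD)) => s _.
apply: contra_neq fchain_nz => fchain0.
have piJB : (pi @: (pi @^-1: JT))%VS = JT by rewrite lpreimK // pi_onto subvf.
rewrite -[cs]map_id -(eq_map sigmaK_img) map_comp -{1}piJB.
by rewrite -limg_fchain // fchain0 limg0.
Qed.

End Retract.

Section Subdirect.
Variables (F : fieldType) (B T1 T2 : ncalg F).
Hypotheses (hB : is_alg B) (hT1 : is_alg T1) (hT2 : is_alg T2).
Variables (f1 : 'Hom(carrier B, carrier T1)) (f2 : 'Hom(carrier B, carrier T2)).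
Hypotheses (f1M : forall x y, f1 (amul x y) = amul (f1 x) (f1 y))
           (f2M : forall x y, f2 (amul x y) = amul (f2 x) (f2 y)).
Hypothesis f12_inj : forall x, f1 x = 0 -> f2 x = 0 -> x = 0.

Lemma identity_subdirect (P : ncpoly F) :
  is_identity T1 P -> is_identity T2 P -> is_identity B P.
Proof. by move=> id1 id2 s; apply: f12_inj; rewrite eval_poly_hom // ?id1 ?id2. Qed.

Hypotheses (f1_onto : limg f1 = fullv) (f2_onto : limg f2 = fullv).

Lemma radical_subdirect J1 J2 :
  is_radical J1 -> is_radical J2 -> is_radical (f1 @^-1: J1 :&: f2 @^-1: J2).
Proof.
case=> iJ1 [n1 [n1_gt0 J1n]] maxJ1 [iJ2 [n2 [n2_gt0 J2n]] maxJ2].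
set JB := (_ :&: _)%VS.
have f1JB : (f1 @: JB <= J1)%VS.
  by apply/subvP => _ /memv_imgP [x /[!memv_cap] /andP [+ _] ->]; rewrite memv_preim.
have f2JB : (f2 @: JB <= J2)%VS.
  by apply/subvP => _ /memv_imgP [x /[!memv_cap] /andP [_ +] ->]; rewrite memv_preim.
have n_gt0 : (0 < n1 + n2)%N by rewrite addn_gt0 n1_gt0.
split.
- move=> x y /[!memv_cap] /andP [x1 x2].
  have [? ?] := is_ideal_preim f1M iJ1 y x1; have [? ?] := is_ideal_preim f2M iJ2 y x2.
  by split; apply/andP.
- exists (n1 + n2)%N; split => //; apply/eqP; rewrite -subv0; apply/subvP => x JBx.
  rewrite memv0; apply/eqP/f12_inj; apply/eqP; rewrite -memv0.
    rewrite -(sppow_eq0_leq hT1 n1_gt0 (leq_addr n2 n1) J1n).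
    apply: subvP (sppow_subv hT1 _ f1JB) _ _.
    by rewrite -limg_sppow // memv_img.
  rewrite -(sppow_eq0_leq hT2 n2_gt0 (leq_addl n1 n2) J2n).
  apply: subvP (sppow_subv hT2 _ f2JB) _ _.
  by rewrite -limg_sppow // memv_img.
move=> I iI nI; apply/subvP => x Ix; rewrite memv_cap -!memv_preim.
have := maxJ1 _ (is_ideal_limg f1M f1_onto iI) (nilpotent_limg hB hT1 f1M nI).
have := maxJ2 _ (is_ideal_limg f2M f2_onto iI) (nilpotent_limg hB hT2 f2M nI).
by move=> /subvP sub2 /subvP sub1; rewrite sub1 ?sub2 ?memv_img.
Qed.

End Subdirect.

Section WedderburnMalcevProjection.
Variables (F : fieldType) (A : ncalg F) (hA : is_alg A) (J S : {vspace carrier A}).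
Hypotheses (hS : wm_complement J S) (iJ : is_ideal J).
Local Notation p := (daddv_pi S J).

Lemma memv_daddv_piC t : t - p t \in J.
Proof.
have [_ SJ capSJ] := hS.
have tSJ : t \in (S + J)%VS by rewrite SJ memvf.
by rewrite -{1}(daddv_pi_add capSJ tSJ) addrAC subrr add0r memv_pi.
Qed.

Lemma daddv_pi_eq t a : a \in S -> t - a \in J -> p t = a.
Proof.
have [_ _ capSJ] := hS; move=> Sa Ja; apply/eqP; rewrite -subr_eq0 -memv0 -capSJ memv_cap.
rewrite memvB ?memv_pi //=.
have -> : p t - a = (t - a) - (t - p t) by rewrite [RHS]addrC opprB addrA subrK.
by rewrite memvB // memv_daddv_piC.
Qed.

Lemma daddv_pi0 j : j \in J -> p j = 0.
Proof. by move=> Jj; apply: daddv_pi_eq; rewrite ?mem0v ?subr0. Qed.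

Lemma daddv_piM s t : p (amul s t) = amul (p s) (p t).
Proof.
have [subS _ _] := hS; apply: daddv_pi_eq; first by apply: subS; apply: memv_pi.
have -> : amul s t - amul (p s) (p t) = amul (s - p s) t + amul (p s) (t - p t).
  by rewrite amulBl // amulBr // addrA subrK.
by rewrite memvD //; [apply: (iJ _ (memv_daddv_piC s)).1 |
                      apply: (iJ _ (memv_daddv_piC t)).2].
Qed.

End WedderburnMalcevProjection.

Section Presentations.
Variable F : fieldType.
Implicit Types (A B : ncalg F) (P : ncpoly F) (Ts : seq (ncalg F)).

Lemma eval_poly_prod A B P (s : nat -> carrier (prod_alg A B)) :
  eval_poly P s = (eval_poly P (fun n => (s n).1), eval_poly P (fun n => (s n).2)).
Proof.
have foldl_pair a w :
    foldl (fun acc k => @amul F (prod_alg A B) acc (s k)) a w =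
    (foldl (fun acc k => amul acc (s k).1) a.1 w,
     foldl (fun acc k => amul acc (s k).2) a.2 w).
  by elim: w a => [[]|k w IHw a] //=; rewrite IHw.
rewrite /eval_poly; elim: P => [|t P IHP]; first by rewrite !big_nil.
by rewrite !big_cons IHP /eval_word foldl_pair.
Qed.

Lemma identity_prod A B P :
  is_identity (prod_alg A B) P <-> is_identity A P /\ is_identity B P.
Proof.
split=> [idAB | [idA idB] s]; last by rewrite eval_poly_prod idA idB.
split=> s; [have := idAB (fun n => (s n, 0)) | have := idAB (fun n => (0, s n))].
  by rewrite eval_poly_prod => -[].
by rewrite eval_poly_prod => -[].
Qed.

Lemma identity_dsum Ts P :
  is_identity (dsum Ts) P <->
  forall j, (j < size Ts)%N -> is_identity (nth (alg0 F) Ts j) P.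
Proof.
elim: Ts => [|T Ts IHTs] /=; first by split=> // _ s; apply: thinmx0.
split=> [/identity_prod [idT /IHTs idTs] [|j] // /idTs // | idTTs].
apply/identity_prod; split; first exact: (idTTs 0%N).
by apply/IHTs => j; apply: (idTTs j.+1).
Qed.

Lemma presentation_identity A Ts j P :
  presentation A Ts -> (j < size Ts)%N ->
  is_identity A P -> is_identity (nth (alg0 F) Ts j) P.
Proof. by case=> _ eqA jTs /eqA /identity_dsum; apply. Qed.

Lemma presentation_set_nth A Ts i B :
  presentation A Ts -> (i < size Ts)%N -> is_alg B -> full B ->
  (forall P, is_identity A P -> is_identity B P) ->
  (forall P, is_identity B P -> is_identity (nth (alg0 F) Ts i) P) ->
  presentation A (set_nth (alg0 F) Ts i B).
Proof.
move=> presTs iTs algB fullB idAB idBT; have [Ts_full eqA] := presTs.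
have size_Ts' : size (set_nth (alg0 F) Ts i B) = size Ts.
  by rewrite size_set_nth; apply/maxn_idPr.
split=> [j|P].
  by rewrite size_Ts' nth_set_nth /=; case: eqP => _ //; apply: Ts_full.
split=> [idA | /identity_dsum idTs'].
  apply/identity_dsum => j; rewrite size_Ts' nth_set_nth /=.
  case: eqP => [_ _ | _ jTs]; first exact: idAB.
  exact: presentation_identity presTs jTs idA.
apply/eqA/identity_dsum => j jTs; have := idTs' j; rewrite size_Ts' nth_set_nth /=.
by case: eqP => [-> /(_ iTs)/idBT | _ /(_ jTs)].
Qed.

End Presentations.

Section Fusion.
Variables (F : fieldType) (T1 T2 : ncalg F) (hT1 : is_alg T1) (hT2 : is_alg T2).
Variables (J1 S1 : {vspace carrier T1}) (J2 : {vspace carrier T2}).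
Variable phi : 'Hom(carrier T1, carrier T2).
Hypotheses (hS1 : wm_complement J1 S1) (iJ1 : is_ideal J1) (iJ2 : is_ideal J2).
Hypothesis phiM : {in S1 &, forall u v, phi (amul u v) = amul (phi u) (phi v)}.

Local Notation p := (daddv_pi S1 J1).
Local Notation W := (fusion_space J1 S1 J2 phi).
Local Notation B := (fusion J1 S1 J2 phi).

Lemma mem_fusion_space z : (z \in W) = (z.2 - phi (p z.1) \in J2).
Proof.
have [_ _ capSJ] := hS1.
apply/idP/idP => [|Jz].
  have lin : linear (fun z : carrier T1 * carrier T2 => z.2 - phi (p z.1)).
    by move=> a x y /=; rewrite !linearP /= scalerN scalerBr addrACA.
  move/(memv_span_linear lin); apply: subvP; apply/span_subvP => _ /mapP [x + ->].
  rewrite !mem_cat => /or3P [] /mapP [u /vbasis_mem Xu ->] /=.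
  - by rewrite daddv_pi_id // subrr mem0v.
  - by rewrite (daddv_pi0 hS1) // !linear0 /= addr0 mem0v.
  - by rewrite !linear0 /= addr0.
have -> : z = (p z.1, phi (p z.1)) + (z.1 - p z.1, 0) + (0, z.2 - phi (p z.1)).
  by case: z {Jz} => z1 z2; apply/eqP; rewrite xpair_eqE /= !addr0 !subrKC !eqxx.
rewrite /fusion_space !span_cat addvA; apply: memv_add; first apply: memv_add.
- apply: memv_map_vbasis (memv_pi _ _ _).
  by move=> a x y /=; rewrite linearP.
- apply: memv_map_vbasis (memv_daddv_piC hS1 _).
  by move=> a x y; rewrite -[RHS]/(a *: x + y, a *: 0 + 0) scaler0 addr0.
apply: memv_map_vbasis Jz.
by move=> a x y; rewrite -[RHS]/(a *: 0 + 0, a *: x + y) scaler0 addr0.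
Qed.

Lemma fusion_space_mul x y :
  x \in W -> y \in W -> @amul _ (prod_alg T1 T2) x y \in W.
Proof.
rewrite !mem_fusion_space /= (daddv_piM hT1 hS1 iJ1) phiM ?memv_pi // => Jx Jy.
have -> : amul x.2 y.2 - amul (phi (p x.1)) (phi (p y.1)) =
    amul (x.2 - phi (p x.1)) y.2 + amul (phi (p x.1)) (y.2 - phi (p y.1)).
  by rewrite amulBl // amulBr // addrA subrK.
by rewrite memvD //; [apply: (iJ2 _ Jx).1 | apply: (iJ2 _ Jy).2].
Qed.

Lemma vsval_fusionM (x y : carrier B) :
  vsval (amul x y) = @amul _ (prod_alg T1 T2) (vsval x) (vsval y).
Proof. by rewrite vsprojK // fusion_space_mul ?subvsP. Qed.

Lemma fusion_is_alg : is_alg B.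
Proof.
have vsvalP a (u v : carrier B) : vsval (a *: u + v) = a *: vsval u + vsval v.
  exact: linearP.
split=> [a x y z | a x y z | x y z]; apply: subvs_inj; rewrite !vsval_fusionM ?vsvalP.
- by rewrite !vsval_fusionM; congr pair; apply: amul_linearl.
- by rewrite !vsval_fusionM; congr pair; apply: amul_linearr.
by rewrite /= !amulA.
Qed.

Definition fusion_fst : 'Hom(carrier B, carrier T1) := linfun (fun x => (vsval x).1).
Definition fusion_snd : 'Hom(carrier B, carrier T2) := linfun (fun x => (vsval x).2).
Definition fusion_lift : 'Hom(carrier T1, carrier B) :=
  linfun (fun t => vsproj W (t, phi (p t))).

Lemma fusion_fstE x : fusion_fst x = (vsval x).1.
Proof. by rewrite lfunE_linear // => a u v; rewrite linearP. Qed.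

Lemma fusion_sndE x : fusion_snd x = (vsval x).2.
Proof. by rewrite lfunE_linear // => a u v; rewrite linearP. Qed.

Lemma vsval_fusion_lift t : vsval (fusion_lift t) = (t, phi (p t)).
Proof.
rewrite lfunE_linear ?vsprojK ?mem_fusion_space ?subrr ?mem0v // => a u v.
by rewrite -linearP [p _]linearP [phi _]linearP.
Qed.

Lemma fusion_liftK : cancel fusion_lift fusion_fst.
Proof. by move=> t; rewrite fusion_fstE vsval_fusion_lift. Qed.

Lemma fusion_snd_lift t : fusion_snd (fusion_lift t) = phi (p t).
Proof. by rewrite fusion_sndE vsval_fusion_lift. Qed.

Lemma fusion_fst_snd_eq0 x : fusion_fst x = 0 -> fusion_snd x = 0 -> x = 0.
Proof.
rewrite fusion_fstE fusion_sndE => x1 x2; apply: subvs_inj; rewrite linear0.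
by case: (vsval x) x1 x2 => /= _ _ -> ->.
Qed.

Lemma fusion_fstM x y : fusion_fst (amul x y) = amul (fusion_fst x) (fusion_fst y).
Proof. by rewrite !fusion_fstE vsval_fusionM. Qed.

Lemma fusion_sndM x y : fusion_snd (amul x y) = amul (fusion_snd x) (fusion_snd y).
Proof. by rewrite !fusion_sndE vsval_fusionM. Qed.

Lemma fusion_liftM s t : fusion_lift (amul s t) = amul (fusion_lift s) (fusion_lift t).
Proof.
apply: subvs_inj; rewrite vsval_fusionM !vsval_fusion_lift /=.
by rewrite (daddv_piM hT1 hS1 iJ1) phiM ?memv_pi.
Qed.

Lemma fusion_fst_onto : limg fusion_fst = fullv.
Proof. by apply: limg_fullv => t; exists (fusion_lift t); apply: fusion_liftK. Qed.

Hypothesis phiS1_J2 : (phi @: S1 + J2)%VS = fullv.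

Lemma fusion_snd_onto : limg fusion_snd = fullv.
Proof.
apply: limg_fullv => y.
have /memv_addP [_ /memv_imgP [u Su ->] [j Jj ->]] : y \in (phi @: S1 + J2)%VS.
  by rewrite phiS1_J2 memvf.
exists (fusion_lift u + vsproj W (0, j)).
rewrite linearD /= fusion_snd_lift fusion_sndE vsprojK; last first.
  by rewrite mem_fusion_space /= !linear0 addr0.
by have [_ _ capSJ] := hS1; rewrite daddv_pi_id.
Qed.

Lemma fusion_radical : is_radical J1 -> is_radical J2 -> is_radical (fusion_fst @^-1: J1).
Proof.
move=> radJ1 radJ2.
have := radical_subdirect fusion_is_alg hT1 hT2 fusion_fstM fusion_sndM
  fusion_fst_snd_eq0 fusion_fst_onto fusion_snd_onto radJ1 radJ2.
congr is_radical; apply/eqP; rewrite eqEsubv capvSl subv_cap subvv /=.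
apply/subvP => x; rewrite -!memv_preim fusion_fstE fusion_sndE => J1x.
by have := subvsP x; rewrite mem_fusion_space (daddv_pi0 hS1) // linear0 subr0.
Qed.

Lemma fusion_full : is_radical J1 -> is_radical J2 -> full T1 -> full B.
Proof.
move=> radJ1 radJ2.
exact: (full_retract fusion_is_alg hT1 fusion_fstM fusion_liftM fusion_liftK radJ1
         (fusion_radical radJ1 radJ2)).
Qed.

Lemma fusion_identity (P : ncpoly F) :
  is_identity T1 P -> is_identity T2 P -> is_identity B P.
Proof. exact: (identity_subdirect fusion_fstM fusion_sndM fusion_fst_snd_eq0). Qed.

Lemma identity_fusion (P : ncpoly F) : is_identity B P -> is_identity T1 P.
Proof. exact: (identity_inj fusion_liftM (can_inj fusion_liftK)). Qed.

End Fusion.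

Theorem lemma2p9 (F : closedFieldType) (charF0 : [pchar F] =i pred0)
  (A : ncalg F) (hA : is_alg A)
  (P1 P2 : seq (ncalg F))
  (hP1 : presentation A P1) (hP2 : presentation A P2)
  (i k : nat) (hi : (i < size P1)%N) (hk : (k < size P2)%N)
  (T1 T2 : ncalg F)
  (hT1 : nth (alg0 F) P1 i = T1) (hT2 : nth (alg0 F) P2 k = T2)
  (J1 S1 : {vspace carrier T1}) (J2 S2 : {vspace carrier T2})
  (hJ1 : is_radical J1) (hS1 : wm_complement J1 S1)
  (hJ2 : is_radical J2) (hS2 : wm_complement J2 S2)
  (phi : 'Hom(carrier T1, carrier T2))
  (phi_onto : (phi @: S1)%VS = S2)
  (phi_inj : (lker phi :&: S1)%VS = 0%VS)
  (phi_mul : {in S1 &, forall u v, phi (amul u v) = amul (phi u) (phi v)}) :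
  presentation A (set_nth (alg0 F) P1 i (fusion J1 S1 J2 phi)).
Proof.
have [algT1 fullT1] : is_alg T1 /\ full T1 by rewrite -hT1; apply: hP1.1.
have [algT2 _] : is_alg T2 /\ full T2 by rewrite -hT2; apply: hP2.1.
have [[idJ1 _ _] [idJ2 _ _]] := (hJ1, hJ2).
have phiS1_J2 : (phi @: S1 + J2)%VS = fullv by rewrite phi_onto; case: hS2.
apply: (presentation_set_nth hP1 hi) => [||P idA|P].
- exact: fusion_is_alg.
- exact: fusion_full.
- apply: fusion_identity => //.
    by rewrite -hT1; apply: presentation_identity hP1 hi idA.
  by rewrite -hT2; apply: presentation_identity hP2 hk idA.
by rewrite hT1; apply: identity_fusion.
Qed.
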